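(* Let $x<w$ in $W$ and let $\mathfrak w=s_1\cdots s_n$ be a reduced word of $w$ which is a good word for $x$ and satisfies $\lambda_{x,\mathfrak w}=\lambda(\mathscr C^-_{x,\mathfrak w})^*=(i_1,\ldots,i_d)$ with $i_1=1$. Write $s_i=s_{\alpha_i}$ with $\alpha_i$ simple. Then: (i) $x<s_1x$; (ii) $S(x,s_1w)=S(x,w)\setminus\{\gamma_1\}$, where $\gamma_1=s_n\cdots s_2\alpha_1$; (iii) $s_1\mathfrak w=s_2\cdots s_n$ is a good word of $s_1w$ for $x$; (iv) $\lambda_{x,s_1\mathfrak w}=(i_2-1,\ldots,i_d-1)=\lambda(\mathscr C^-_{x,s_1\mathfrak w})^*$ (positions in $s_2\cdots s_n$ numbered $1,\ldots,n-1$).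
   Context: Let $W$ be the Weyl group of a finite reduced root system $\Phi$ with positive roots $\Phi_+$ and simple reflections $S$, length $\ell$, Bruhat order $\le$. For $x\le w$, $S(x,w)=\{\alpha\in\Phi_+: x\le ws_\alpha<w\}$. For a reduced word $\mathfrak w=s_1\cdots s_n$ of $w$, $\lambda_{x,\mathfrak w}$ is the set of $i$ with $x\le s_1\cdots\widehat{s_i}\cdots s_n$, written as an increasing tuple $(i_1,\ldots,i_d)$; $\mathfrak w$ is a good word for $x$ if $x=s_1\cdots\widehat{s_{i_1}}\cdots\widehat{s_{i_d}}\cdots s_n$. Maximal chains $w=w_0\to\cdots\to w_d=x$ of covers in $[x,w]$ are labeled by $\lambda(\mathscr C)=(i_1,\ldots,i_d)$, where $w_k$ is obtained from $\mathfrak w$ by deleting $s_{i_1},\ldots,s_{i_k}$; $\mathscr C^-_{x,\mathfrak w}$ denotes the unique maximal chain with strictly decreasing label (which is lexicographically largest, by Björner–Wachs shellability). For a tuple $\lambda=(a_1,\ldots,a_d)$, $\lambda^*=(a_d,\ldots,a_1)$. *)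

From HB Require Import structures.
From mathcomp Require Import all_boot all_order all_algebra.
Set Implicit Arguments. Unset Strict Implicit. Unset Printing Implicit Defensive.
Import Order.TTheory GRing.Theory Num.Theory.
Local Open Scope ring_scope.

(* The Weyl group W is realised as a group of m x m matrices acting on the left
   on column vectors; its elements are products of simple reflections. *)

Section RootSystem.
Variables (R : realFieldType) (m : nat).

Definition dot (u v : 'cV[R]_m) : R := (u^T *m v) 0 0.

Definition refl (a : 'cV[R]_m) : 'M[R]_m :=
  1%:M - (2 / dot a a) *: (a *m a^T).

Definition root_system (Phi : seq 'cV[R]_m) : Prop :=
  [/\ (0 : 'cV[R]_m) \notin Phi,
      (forall v : 'cV[R]_m, (forall a, a \in Phi -> dot a v = 0) -> v = 0),
      (forall a b, a \in Phi -> b \in Phi -> refl a *m b \in Phi),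
      (forall a b, a \in Phi -> b \in Phi ->
          exists z : int, 2 * dot a b / dot a a = z%:~R) &
      (forall a (c : R), a \in Phi -> c *: a \in Phi -> c = 1 \/ c = -1)].

(* t is regular: it determines the positive system Phi_+ = {a | (t,a) > 0}. *)
Definition regular (Phi : seq 'cV[R]_m) (t : 'cV[R]_m) : Prop :=
  forall a, a \in Phi -> dot t a != 0.

Variables (Phi : seq 'cV[R]_m) (t : 'cV[R]_m).

Definition posroot (a : 'cV[R]_m) : bool := (a \in Phi) && (0 < dot t a).

Definition posroots : seq 'cV[R]_m := [seq a <- Phi | posroot a].

Definition simple (a : 'cV[R]_m) : bool :=
  posroot a && ~~ has (fun b => has (fun c => a == b + c) posroots) posroots.

(* a word is a sequence of simple roots alpha_1 ... alpha_n, standing for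
   s_{alpha_1} ... s_{alpha_n} *)
Definition is_word (s : seq 'cV[R]_m) : bool := all simple s.

Definition wprod (s : seq 'cV[R]_m) : 'M[R]_m :=
  foldr (fun a M => refl a *m M) 1%:M s.

Definition in_W (w : 'M[R]_m) : Prop := exists s, is_word s /\ wprod s = w.

Definition length_is (w : 'M[R]_m) (k : nat) : Prop :=
  (exists s, [/\ is_word s, size s = k & wprod s = w]) /\
  (forall s, is_word s -> wprod s = w -> (k <= size s)%N).

Definition bstep (u v : 'M[R]_m) : Prop :=
  exists b, [/\ b \in Phi, v = u *m refl b &
    exists p q, [/\ length_is u p, length_is v q & (p < q)%N]].

Inductive bruhat_le (x : 'M[R]_m) : 'M[R]_m -> Prop :=
| bruhat_refl : in_W x -> bruhat_le x x
| bruhat_next u v : bruhat_le x u -> bstep u v -> bruhat_le x v.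

Definition bruhat_lt (u v : 'M[R]_m) : Prop := bruhat_le u v /\ u <> v.

Definition covered (u v : 'M[R]_m) : Prop :=
  bruhat_lt u v /\ exists p, length_is u p /\ length_is v p.+1.

Definition inS (x w : 'M[R]_m) (b : 'cV[R]_m) : Prop :=
  [/\ posroot b, bruhat_le x (w *m refl b) & bruhat_lt (w *m refl b) w].

Definition reduced_word (s : seq 'cV[R]_m) (w : 'M[R]_m) : Prop :=
  [/\ is_word s, wprod s = w & length_is w (size s)].

(* delete the letters at the (1-based) positions in l *)
Definition del_set (l : seq nat) (s : seq 'cV[R]_m) : seq 'cV[R]_m :=
  mask [seq j \notin l | j <- iota 1 (size s)] s.

(* lam_spec x s l  <->  l = lambda_{x,s} (increasing tuple, positions 1..n) *)
Definition lam_spec (x : 'M[R]_m) (s : seq 'cV[R]_m) (l : seq nat) : Prop :=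
  sorted ltn l /\
  forall i, i \in l <-> ((1 <= i <= size s)%N /\ bruhat_le x (wprod (del_set [:: i] s))).

Definition good_word (x : 'M[R]_m) (s : seq 'cV[R]_m) : Prop :=
  exists l, lam_spec x s l /\ x = wprod (del_set l s).

(* chain_label x s mu  <->  mu = (j_1,...,j_d) is the label of a maximal chain
   w = w_0 -> w_1 -> ... -> w_d = x of covers, where w_k is obtained from the
   word s by deleting the letters at positions j_1,...,j_k. *)
Definition chain_label (x : 'M[R]_m) (s : seq 'cV[R]_m) (mu : seq nat) : Prop :=
  [/\ uniq mu, all (fun j => 1 <= j <= size s)%N mu,
      (forall k, (0 < k <= size mu)%N ->
         covered (wprod (del_set (take k mu) s)) (wprod (del_set (take k.-1 mu) s))) &
      wprod (del_set mu s) = x].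

End RootSystem.

(* Two facts about a simple reflection s_a drive the argument: s_a permutes the
   positive roots other than a, and the lifting property (if x < s_a x then
   x <= z implies x <= s_a z).  Because the decreasing chain has label rev l
   with l starting at 1, it deletes s_1 last: its final step is the cover
   x < s_1 x, giving (i), and all earlier terms begin with s_1, so stripping
   s_1 turns it into a chain for s_2...s_n with labels shifted down by one;
   lengths along the chain keep these words reduced, giving (iii) and (v).
   Lifting turns x <= s_1 s_2..^s_i..s_n into x <= s_2..^s_i..s_n, giving (iv).
   For (ii), put w' = s_1 w.  Lifting makes x <= w' s_b equivalent to
   x <= w s_b, and for positive b, w' s_b < w' iff w' b < 0 while w s_b < w
   iff s_1 w' b < 0; as s_1 permutes the positive roots other than alpha_1,
   these signs agree except at w' b = alpha_1, i.e. b = gamma_1. *)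

From HB Require Import structures.
From mathcomp Require Import all_boot all_order all_algebra.
From mathcomp Require Import ring lra zify.
From Stdlib Require Import Classical_Prop.
Import Order.TTheory GRing.Theory Num.Theory.
Local Open Scope ring_scope.
Set Implicit Arguments. Unset Strict Implicit. Unset Printing Implicit Defensive.

Section Reflections.
Variables (R : realFieldType) (m : nat).
Implicit Types (u v a : 'cV[R]_m) (g : 'M[R]_m).

Lemma dotE u v : dot u v = \sum_i u i 0 * v i 0.
Proof. by rewrite /dot mxE; apply: eq_bigr => i _; rewrite mxE. Qed.

Lemma dotC u v : dot u v = dot v u.
Proof. by rewrite !dotE; apply: eq_bigr => i _; rewrite mulrC. Qed.

Lemma dotDr u v a : dot u (v + a) = dot u v + dot u a.
Proof. by rewrite /dot mulmxDr mxE. Qed.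

Lemma dotZr u v (k : R) : dot u (k *: v) = k * dot u v.
Proof. by rewrite /dot -scalemxAr mxE. Qed.

Lemma dotNr u v : dot u (- v) = - dot u v.
Proof. by rewrite -scaleN1r dotZr mulN1r. Qed.

Lemma dotBr u v a : dot u (v - a) = dot u v - dot u a.
Proof. by rewrite dotDr dotNr. Qed.

Lemma dotZl u v (k : R) : dot (k *: v) u = k * dot v u.
Proof. by rewrite dotC dotZr dotC. Qed.

Lemma dotNl u v : dot (- v) u = - dot v u.
Proof. by rewrite dotC dotNr dotC. Qed.

Lemma dotBl u v a : dot (v - a) u = dot v u - dot a u.
Proof. by rewrite dotC dotBr !(dotC u). Qed.

Lemma dot_orth g u v : g^T *m g = 1%:M -> dot (g *m u) (g *m v) = dot u v.
Proof. by move=> gg; rewrite /dot trmx_mul -mulmxA (mulmxA g^T) gg mul1mx. Qed.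

Lemma dot_eq0 u : (dot u u == 0) = (u == 0).
Proof.
apply/idP/eqP => [|->]; last by rewrite dotE big1 // => i _; rewrite mxE mul0r.
rewrite dotE psumr_eq0 => [/allP u0|i _]; last by rewrite -expr2 sqr_ge0.
apply/matrixP => i j; rewrite (ord1 j) mxE.
by have := u0 i (mem_index_enum _); rewrite -expr2 sqrf_eq0 => /eqP.
Qed.

Lemma dot_gt0 u : u != 0 -> 0 < dot u u.
Proof.
move=> u0; rewrite lt_def dot_eq0 u0 dotE.
by apply: sumr_ge0 => i _; rewrite -expr2 sqr_ge0.
Qed.

Lemma mul_outer u v : (u *m u^T) *m v = dot u v *: u.
Proof. by rewrite -mulmxA [u^T *m v]mx11_scalar mul_mx_scalar. Qed.

Definition cartan a v : R := 2 * dot a v / dot a a.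

Lemma refl_cartan a v : refl a *m v = v - cartan a v *: a.
Proof.
rewrite /refl mulmxBl mul1mx -scalemxAl mul_outer scalerA.
by rewrite /cartan mulrAC.
Qed.

Lemma refl_tr a : (refl a)^T = refl a.
Proof. by rewrite /refl linearB /= trmx1 linearZ /= trmx_mul trmxK. Qed.

Lemma reflK a : a != 0 -> refl a *m refl a = 1%:M.
Proof.
move=> a0; have aa := dot_gt0 a0; rewrite /refl.
set P := a *m a^T; set k := 2 / dot a a.
have PP : P *m P = dot a a *: P by rewrite mulmxA mul_outer -scalemxAl.
rewrite mulmxBl mul1mx mulmxBr mulmx1 -scalemxAr -scalemxAl PP !scalerA.
have -> : k * k * dot a a = k + k by rewrite /k; field; rewrite gt_eqF.
by rewrite scalerDl opprB addrK subrK.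
Qed.

Lemma refl_conj g a : g^T *m g = 1%:M -> g *m refl a *m g^T = refl (g *m a).
Proof.
move=> gg; rewrite /refl dot_orth // mulmxBr mulmx1 mulmxBl (mulmx1C gg).
by rewrite -scalemxAr -scalemxAl trmx_mul !mulmxA.
Qed.

Lemma refl_self a : a != 0 -> refl a *m a = - a.
Proof.
move=> a0; rewrite refl_cartan.
have -> : cartan a a = 1 + 1 by rewrite /cartan; field; rewrite dot_eq0.
by rewrite scalerDl scale1r opprD addrA subrr sub0r.
Qed.

Lemma reflN a : refl (- a) = refl a.
Proof. by rewrite /refl dotNl dotNr opprK linearN /= mulNmx mulmxN opprK. Qed.

End Reflections.

Section Words.
Variables (R : realFieldType) (m : nat).
Implicit Types (u v : seq 'cV[R]_m).

Lemma wprod_cat u v : wprod (u ++ v) = wprod u *m wprod v.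
Proof. by elim: u => [|c u IH] /=; rewrite ?mul1mx // IH mulmxA. Qed.

Lemma wprod_tr u : (wprod u)^T = wprod (rev u).
Proof.
elim: u => [|c u IH] /=; first by rewrite trmx1.
by rewrite trmx_mul IH refl_tr rev_cons -cats1 wprod_cat /= mulmx1.
Qed.

Lemma wprod_orth u : all (fun c => c != 0) u -> (wprod u)^T *m wprod u = 1%:M.
Proof.
elim: u => [|c u IH] /=; first by rewrite trmx1 mul1mx.
case/andP => c0 /IH uu.
by rewrite trmx_mul refl_tr -mulmxA (mulmxA (refl c)) reflK // mul1mx.
Qed.

End Words.

Section Deletion.
Variables (R : realFieldType) (m : nat).
Implicit Types (u : seq 'cV[R]_m) (L : seq nat).

Lemma eq_del_set L L' u : {in [pred j | 0 < j]%N, L =i L'} ->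
  del_set L u = del_set L' u.
Proof.
move=> LL'; congr mask; apply/eq_in_map => j.
by rewrite mem_iota => /andP[j1 _]; rewrite LL'.
Qed.

Lemma del_set_nil u : del_set [::] u = u.
Proof.
rewrite /del_set (eq_map (g := fun=> true)) //.
have /all_pred1P -> : all (pred1 true) [seq true | _ <- iota 1 (size u)].
  by apply/allP => b /mapP[? _ ->].
by rewrite size_map size_iota mask_true.
Qed.

Lemma del_set_cons L c u : del_set L (c :: u) =
  if 1%N \in L then del_set [seq j.-1 | j <- L] u
  else c :: del_set [seq j.-1 | j <- L] u.
Proof.
rewrite /del_set /= -(addn1 1) iotaDl -map_comp.
have -> : [seq ((fun j => j \notin L) \o addn 1) j | j <- iota 1 (size u)] =
          [seq j \notin [seq j.-1 | j <- L] | j <- iota 1 (size u)].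
  apply/eq_in_map => j; rewrite mem_iota => /andP[j1 _] /=.
  rewrite add1n; congr negb; apply/idP/mapP => [jL | [i iL ji]]; first by exists j.+1.
  by rewrite ji prednK // lt0n; apply: contraTneq j1 => i0; rewrite ji i0.
by case: (1%N \in L).
Qed.

Lemma del_set1_cons j c u : (0 < j)%N ->
  del_set [:: j.+1] (c :: u) = c :: del_set [:: j] u.
Proof. by move=> j0; rewrite del_set_cons inE eq_sym eqSS (negbTE (lt0n_neq0 j0)). Qed.

Lemma size_del_set L u : uniq L -> all (fun j => 1 <= j <= size u)%N L ->
  size (del_set L u) = (size u - size L)%N.
Proof.
move=> uL /allP Lr; rewrite size_mask ?size_map ?size_iota // count_map.
have countL : count (mem L) (iota 1 (size u)) = size L.
  rewrite -size_filter; apply/perm_size/uniq_perm; rewrite ?filter_uniq ?iota_uniq //.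
  move=> j; rewrite mem_filter mem_iota; apply: andb_idr => /Lr.
  by rewrite addnC addn1 ltnS.
rewrite -{2}(size_iota 1 (size u)) -(count_predC (mem L)) -countL addKn.
exact: eq_count.
Qed.

Lemma del_set_rcons1 L c u :
  del_set (rcons L 1%N) (c :: u) = del_set [seq j.-1 | j <- L] u.
Proof.
rewrite del_set_cons mem_rcons mem_head map_rcons; apply: eq_del_set => j j0.
by rewrite mem_rcons inE (gtn_eqF j0).
Qed.
End Deletion.

Section RootSystem.
Variables (R : realFieldType) (m : nat) (Phi : seq 'cV[R]_m) (t : 'cV[R]_m).
Hypotheses (HPhi : root_system Phi) (Ht : regular Phi t).
Implicit Types (a b c : 'cV[R]_m) (u v : seq 'cV[R]_m) (w x y z : 'M[R]_m).

Local Notation posroot := (posroot Phi t).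
Local Notation simple := (simple Phi t).
Local Notation is_word := (is_word Phi t).
Local Notation in_W := (in_W Phi t).
Local Notation length_is := (length_is Phi t).
Local Notation bruhat_le := (bruhat_le Phi t).
Local Notation bruhat_lt := (bruhat_lt Phi t).
Local Notation bstep := (bstep Phi t).
Local Notation covered := (covered Phi t).

Lemma root_neq0 a : a \in Phi -> a != 0.
Proof. by case: HPhi => Phi0 _ _ _ _ aPhi; apply: contraNneq Phi0 => <-. Qed.

Lemma root_refl a b : a \in Phi -> b \in Phi -> refl a *m b \in Phi.
Proof. by case: HPhi => _ _ + _ _; apply. Qed.

Lemma rootN a : a \in Phi -> - a \in Phi.
Proof. by move=> aPhi; rewrite -refl_self ?root_neq0 ?root_refl. Qed.

Lemma cartan_int a b : a \in Phi -> b \in Phi -> exists k : int, cartan a b = k%:~R.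
Proof. by case: HPhi => _ _ _ + _; apply. Qed.

Lemma root_scale a (k : R) : a \in Phi -> k *: a \in Phi -> k = 1 \/ k = -1.
Proof. by case: HPhi => _ _ _ _; apply. Qed.

Lemma root_sign a : a \in Phi -> dot t a < 0 \/ 0 < dot t a.
Proof. by move/Ht; rewrite neq_lt => /orP[]; [left | right]. Qed.

Lemma posroot_root a : posroot a -> a \in Phi.
Proof. by case/andP. Qed.

Lemma posroot_gt0 a : posroot a -> 0 < dot t a.
Proof. by case/andP. Qed.

Lemma posrootN a : a \in Phi -> dot t a < 0 -> posroot (- a).
Proof. by move=> aPhi ta; rewrite /posroot rootN // dotNr oppr_gt0. Qed.

Lemma simple_posroot a : simple a -> posroot a.
Proof. by case/andP. Qed.

Lemma simple_root a : simple a -> a \in Phi.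
Proof. by move/simple_posroot/posroot_root. Qed.

Lemma simple_indecomposable a b c : simple a -> posroot b -> posroot c -> a <> b + c.
Proof.
case/andP => _ /hasPn noDec bP cP abc.
have /noDec/hasPn/(_ c) : b \in posroots Phi t by rewrite mem_filter bP posroot_root.
by rewrite mem_filter cP posroot_root // abc eqxx => /(_ isT).
Qed.

Lemma root_dot_sqr_lt a b : a \in Phi -> b \in Phi -> b != a -> b != - a ->
  dot a b ^+ 2 < dot a a * dot b b.
Proof.
move=> aPhi bPhi ba baN; have bb := dot_gt0 (root_neq0 bPhi).
set v := dot b b *: a - dot a b *: b.
have vv : dot v v = dot b b * (dot a a * dot b b - dot a b ^+ 2).
  by rewrite /v !(dotBl, dotBr, dotZl, dotZr) (dotC b a); ring.
rewrite -subr_gt0 -(pmulr_rgt0 _ bb) -vv dot_gt0 // subr_eq0.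
apply/eqP => ab; have a_eq : a = (dot a b / dot b b) *: b.
  by rewrite mulrC -scalerA -ab scalerA mulVf ?gt_eqF // scale1r.
have scaled : (dot a b / dot b b) *: b \in Phi by rewrite -a_eq.
have [] := root_scale bPhi scaled => k1.
  by move: ba; rewrite a_eq k1 scale1r eqxx.
by move: baN; rewrite a_eq k1 scaleN1r opprK eqxx.
Qed.

Lemma cartan_pos_eq1 a b : a \in Phi -> b \in Phi -> b != a -> b != - a ->
  0 < cartan a b -> cartan a b = 1 \/ cartan b a = 1.
Proof.
move=> aPhi bPhi ba baN ab_gt0.
have aa := dot_gt0 (root_neq0 aPhi); have bb := dot_gt0 (root_neq0 bPhi).
have [k abk] := cartan_int aPhi bPhi; have [k' bak] := cartan_int bPhi aPhi.
have ba_gt0 : 0 < cartan b a.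
  have cartan_gt0 c d : d \in Phi -> (0 < cartan d c) = (0 < dot d c).
    by move=> dPhi; rewrite /cartan pmulr_lgt0 ?invr_gt0 ?dot_gt0 ?root_neq0 ?pmulr_rgt0.
  by move: ab_gt0; rewrite !cartan_gt0 // dotC.
have prod_lt4 : cartan a b * cartan b a < 4.
  have -> : cartan a b * cartan b a = 4 * dot a b ^+ 2 / (dot a a * dot b b).
    by rewrite /cartan (dotC b a); field; rewrite !gt_eqF.
  rewrite ltr_pdivrMr ?mulr_gt0 // ltr_pM2l //.
  exact: root_dot_sqr_lt.
move: ab_gt0 ba_gt0 prod_lt4; rewrite abk bak -intrM !ltr0z (_ : 4 = 4%:~R) //.
rewrite ltr_int => k0 k'0 kk'.
have [->|->] : k = 1 \/ k' = 1 by lia.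
- by left.
- by right.
Qed.

Lemma refl_posroot_cartan_le0 a b : posroot a -> posroot b -> cartan a b <= 0 ->
  0 < dot t (refl a *m b).
Proof.
move=> /posroot_gt0 ta /posroot_gt0 tb ab_le0; rewrite refl_cartan dotBr dotZr.
nra.
Qed.

(* Induction on a bound for <b, a^v>.  If s_a b were negative, integrality and
   Cauchy-Schwarz force <b, a^v> = 1 or <a, b^v> = 1; the first writes a as a
   sum of two positive roots, the second does so as well unless b - a is
   positive, and then the induction applies to b - a, whose Cartan integer is
   smaller by 2. *)
Lemma refl_simple_pos a b : simple a -> posroot b -> b != a ->
  0 < dot t (refl a *m b).
Proof.
move=> aS; have aPhi := simple_root aS; have aP := simple_posroot aS.
have aa := dot_gt0 (root_neq0 aPhi).
suff bounded (N : nat) b' : posroot b' -> b' != a -> cartan a b' <= N%:R ->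
    0 < dot t (refl a *m b').
  move=> bP ba; have [k abk] := cartan_int aPhi (posroot_root bP).
  apply: (bounded `|k|%N) => //; rewrite abk pmulrn ler_int; lia.
elim: N b' => [|N IHN] {}b bP ba abN.
  exact: refl_posroot_cartan_le0.
have [ab_le0 | ab_gt0] := lerP (cartan a b) 0; first exact: refl_posroot_cartan_le0.
have bPhi := posroot_root bP; have tb := posroot_gt0 bP.
have sbPhi : refl a *m b \in Phi by rewrite root_refl.
have baN : b != - a.
  by apply: contraTneq tb => ->; rewrite dotNr -leNgt oppr_le0 ltW ?posroot_gt0.
have [sb_lt0 | //] := root_sign sbPhi; exfalso.
have [ab1 | ba1] := cartan_pos_eq1 aPhi bPhi ba baN ab_gt0.
  apply: (simple_indecomposable aS bP (posrootN sbPhi sb_lt0)).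
  by rewrite refl_cartan ab1 scale1r opprB addrC subrK.
have amb : a - b \in Phi by rewrite -[b]scale1r -ba1 -refl_cartan root_refl.
have [amb_lt0 | amb_gt0] := root_sign amb; last first.
  have ambP : posroot (a - b) by rewrite /posroot amb.
  by apply: (simple_indecomposable aS bP ambP); rewrite addrC subrK.
have bma := posrootN amb amb_lt0; rewrite opprB in bma.
have bma_a : b - a != a.
  apply/eqP => b2a; have two_a : (1 + 1) *: a = b.
    by rewrite scalerDl scale1r -{1}b2a subrK.
  by have := root_scale (k := 1 + 1) aPhi; rewrite two_a => /(_ bPhi) []; lra.
have sbma_gt0 : 0 < dot t (refl a *m (b - a)).
  apply: IHN => //; move: abN; rewrite -natr1.
  have -> : cartan a (b - a) = cartan a b - 2.
    by rewrite /cartan dotBr; field; rewrite gt_eqF.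
  lra.
have sbmaP : posroot (refl a *m (b - a)).
  by rewrite /posroot sbma_gt0 root_refl ?(posroot_root bma).
apply: (simple_indecomposable aS sbmaP (posrootN sbPhi sb_lt0)).
by rewrite mulmxBr refl_self ?root_neq0 // opprK addrAC subrr add0r.
Qed.

Lemma refl_simple_neg a c : simple a -> c \in Phi -> c != a -> c != - a ->
  (dot t (refl a *m c) < 0) = (dot t c < 0).
Proof.
move=> aS cPhi ca caN; have [c_lt0 | c_gt0] := root_sign cPhi.
  have cN : - c != a by rewrite eqr_oppLR.
  have := refl_simple_pos aS (posrootN cPhi c_lt0) cN.
  by rewrite mulmxN dotNr oppr_gt0 c_lt0 => ->.
have cP : posroot c by rewrite /posroot cPhi.
by have := refl_simple_pos aS cP ca; move=> /lt_gtF ->; rewrite lt_gtF.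
Qed.

Lemma word_orth u : is_word u -> (wprod u)^T *m wprod u = 1%:M.
Proof.
move/allP=> uS; apply: wprod_orth; apply/allP => c /uS.
by move/simple_root/root_neq0.
Qed.

Lemma wprod_root u b : is_word u -> b \in Phi -> wprod u *m b \in Phi.
Proof.
elim: u => [|c u IH] /=; first by rewrite mul1mx.
case/andP => cS uW bPhi; rewrite -mulmxA.
exact: root_refl (simple_root cS) (IH uW bPhi).
Qed.

Lemma inW_orth w : in_W w -> w^T *m w = 1%:M.
Proof. by case=> u [uW <-]; apply: word_orth. Qed.

Lemma inW_orthC w : in_W w -> w *m w^T = 1%:M.
Proof. by move/inW_orth/mulmx1C. Qed.

Lemma inW_root w b : in_W w -> b \in Phi -> w *m b \in Phi.
Proof. by case=> u [uW <-]; apply: wprod_root. Qed.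

Lemma inW_mull_simple a w : simple a -> in_W w -> in_W (refl a *m w).
Proof. by move=> aS [u [uW <-]]; exists (a :: u); rewrite /is_word /= aS. Qed.

Lemma mulmx_reflK w b : b \in Phi -> w *m refl b *m refl b = w.
Proof. by move=> bPhi; rewrite -mulmxA reflK ?root_neq0 ?mulmx1. Qed.

Lemma refl_mulmxK w b : b \in Phi -> refl b *m (refl b *m w) = w.
Proof. by move=> bPhi; rewrite mulmxA reflK ?root_neq0 ?mul1mx. Qed.

Lemma word_split_neg u b : is_word u -> posroot b -> dot t (wprod u *m b) < 0 ->
  exists p c q, u = p ++ c :: q /\ wprod q *m b = c.
Proof.
move=> + bP; elim: u => [|c u IH] /=.
  by rewrite mul1mx => _ /lt_gtF; rewrite posroot_gt0.
case/andP => cS uW; have ubPhi := wprod_root uW (posroot_root bP).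
have [ub_lt0 _ | ub_gt0] := root_sign ubPhi.
  by have [p [c' [q [-> qb]]]] := IH uW ub_lt0; exists (c :: p), c', q.
rewrite -mulmxA => neg; exists [::], c, u; split => //; apply/eqP.
apply: contraTT neg => ubc; rewrite -leNgt ltW // refl_simple_pos //.
by rewrite /posroot ubPhi.
Qed.

Lemma wprod_exchange p c q b : is_word (p ++ c :: q) -> wprod q *m b = c ->
  wprod (p ++ c :: q) *m refl b = wprod (p ++ q).
Proof.
rewrite /is_word all_cat => /and3P[_ cS qW] qb.
have b_eq : b = (wprod q)^T *m c by rewrite -qb mulmxA word_orth // mul1mx.
have -> : refl b = (wprod q)^T *m refl c *m wprod q.
  by rewrite b_eq -refl_conj ?trmxK // mulmx1C // word_orth.
rewrite !wprod_cat /= -!mulmxA (mulmxA (wprod q)) (mulmx1C (word_orth qW)) mul1mx.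
by rewrite (mulmxA (refl c)) reflK ?mul1mx // root_neq0 ?simple_root.
Qed.

Lemma length_uniq w p q : length_is w p -> length_is w q -> p = q.
Proof.
move=> [[u [uW <- wu]] min_p] [[v [vW <- wv]] min_q].
by apply/eqP; rewrite eqn_leq min_p // min_q.
Qed.

Lemma length_inW w p : length_is w p -> in_W w.
Proof. by case=> [[u [uW _ <-]] _]; exists u. Qed.

Lemma length_le w p u : length_is w p -> is_word u -> wprod u = w -> (p <= size u)%N.
Proof. by case=> _; apply. Qed.

Lemma length_exists w : in_W w -> exists p, length_is w p.
Proof.
case=> u [uW wu]; have [n su] := ubnP (size u).
elim: n u uW wu su => // n IH u uW wu su.
have [[v [vW vu vw]] | no_shorter] :=
  classic (exists v, [/\ is_word v, (size v < size u)%N & wprod v = w]).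
  exact: IH v vW vw (leq_trans vu su).
exists (size u); split; first by exists u.
by move=> v vW vw; rewrite leqNgt; apply/negP => vu; apply: no_shorter; exists v.
Qed.

Lemma length_mulr_refl_lt w p b : length_is w p -> posroot b ->
  dot t (w *m b) < 0 -> exists2 q, length_is (w *m refl b) q & (q < p)%N.
Proof.
move=> Lw bP neg; have [[u [uW su wu]] _] := Lw; rewrite -wu in neg.
have [p1 [c [q1 [u_eq qb]]]] := word_split_neg uW bP neg.
have W' : is_word (p1 ++ q1).
  by move: uW; rewrite u_eq /is_word !all_cat => /and3P[p1W _ q1W]; apply/andP.
have wb : w *m refl b = wprod (p1 ++ q1) by rewrite -wu u_eq wprod_exchange -?u_eq.
have [q Lq] := length_exists (ex_intro _ _ (conj W' (esym wb))).
exists q => //; apply: leq_ltn_trans (length_le Lq W' (esym wb)) _.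
by rewrite -su u_eq !size_cat /= addnS.
Qed.

Lemma length_mulr_refl_gt w p q b : length_is w p -> length_is (w *m refl b) q ->
  posroot b -> 0 < dot t (w *m b) -> (p < q)%N.
Proof.
move=> Lw Lwb bP wb_gt0; have bPhi := posroot_root bP.
have neg : dot t (w *m refl b *m b) < 0.
  by rewrite -mulmxA refl_self ?root_neq0 // mulmxN dotNr oppr_lt0.
have [q' Lq'] := length_mulr_refl_lt Lwb bP neg.
by rewrite mulmx_reflK // in Lq'; rewrite (length_uniq Lw Lq').
Qed.

Lemma bruhat_inW x z : bruhat_le x z -> in_W x.
Proof. by elim. Qed.

Lemma bstep_inW y z : bstep y z -> in_W y /\ in_W z.
Proof.
by case=> b [_ _ [p [q [Ly Lz _]]]]; split; [exact: length_inW Ly | exact: length_inW Lz].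
Qed.

Lemma bruhat_length x z p q : bruhat_le x z -> length_is x p -> length_is z q ->
  (p <= q)%N /\ (p = q -> x = z).
Proof.
move=> xz; elim: xz q => [_ | y {}z _ IH [b [_ _ [p' [q' [Ly Lz lt]]]]]] q Lx Lz'.
  by rewrite (length_uniq Lx Lz').
have [le _] := IH _ Lx Ly; rewrite (length_uniq Lz' Lz).
by have lt' := leq_ltn_trans le lt; split => [|pq]; [exact: ltnW | rewrite pq ltnn in lt'].
Qed.

Lemma bruhat_lt_length x z p q : bruhat_lt x z ->
  length_is x p -> length_is z q -> (p < q)%N.
Proof.
case=> xz neq Lx Lz; have [le eq] := bruhat_length xz Lx Lz.
by rewrite ltn_neqAle le andbT; apply/eqP => /eq.
Qed.

Lemma bstep_bruhat_lt y z : bstep y z -> bruhat_lt y z.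
Proof.
move=> yz; have [yW _] := bstep_inW yz; split; first exact: bruhat_next (bruhat_refl yW) yz.
case: yz => b [_ _ [p [q [Ly Lz lt]]]] yz; rewrite yz in Ly.
by rewrite (length_uniq Ly Lz) ltnn in lt.
Qed.

Lemma covered_bstep y z : covered y z -> bstep y z.
Proof.
case=> [[yz neq] [p [Ly Lz]]]; case: yz neq Ly Lz => [// | y' {}z yy' y'z _ Ly Lz].
have [b [_ _ [p' [q' [Ly' Lz' lt]]]]] := y'z.
rewrite (length_uniq Lz' Lz) ltnS in lt.
have [le eq] := bruhat_length yy' Ly Ly'.
by rewrite (eq _); last by apply/eqP; rewrite eqn_leq le lt.
Qed.

Lemma bstep_posroot y z : bstep y z ->
  exists b, [/\ posroot b, z = y *m refl b & 0 < dot t (y *m b)].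
Proof.
case=> b [bPhi yz [p [q [Ly Lz lt]]]].
have [b' [b'P b'b]] : exists b', posroot b' /\ refl b' = refl b.
  have [b_lt0 | b_gt0] := root_sign bPhi; first by exists (- b); rewrite reflN posrootN.
  by exists b; rewrite /posroot bPhi.
exists b'; rewrite b'b; split => //.
have [yb_lt0 | //] := root_sign (inW_root (length_inW Ly) (posroot_root b'P)).
have [q' Lq' qp] := length_mulr_refl_lt Ly b'P yb_lt0.
rewrite b'b -yz in Lq'; rewrite (length_uniq Lq' Lz) in qp.
by have := ltn_trans lt qp; rewrite ltnn.
Qed.

Lemma bruhat_lift a x z : simple a -> bstep x (refl a *m x) ->
  bruhat_le x z -> bruhat_le x (refl a *m z).
Proof.
move=> aS ax; elim=> [xW | y {}z xy IH yz]; first exact: bruhat_next (bruhat_refl xW) ax.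
have [yW zW] := bstep_inW yz; have [b [bP z_eq yb_gt0]] := bstep_posroot yz.
have bPhi := posroot_root bP.
have [yba | ybNa] := eqVneq (y *m b) a.
  have -> : refl a = y *m refl b *m y^T by rewrite -yba refl_conj // inW_orth.
  by rewrite z_eq -!mulmxA (mulmxA y^T) (inW_orth yW) mul1mx mulmxA mulmx_reflK.
apply: bruhat_next IH _; exists b; split => //; first by rewrite z_eq mulmxA.
have [p Lp] := length_exists (inW_mull_simple aS yW).
have [q Lq] := length_exists (inW_mull_simple aS zW).
exists p, q; split => //; apply: (length_mulr_refl_gt Lp _ bP).
  by rewrite -mulmxA -z_eq.
by rewrite -mulmxA refl_simple_pos // /posroot inW_root.
Qed.

Lemma bruhat_lift_iff a x z : simple a -> bstep x (refl a *m x) ->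
  bruhat_le x z <-> bruhat_le x (refl a *m z).
Proof.
move=> aS ax; split; first exact: bruhat_lift.
by move/(bruhat_lift aS ax); rewrite refl_mulmxK ?simple_root.
Qed.

Lemma bruhat_lt_refl z p b : length_is z p -> posroot b ->
  bruhat_lt (z *m refl b) z <-> dot t (z *m b) < 0.
Proof.
move=> Lz bP; split => [lt | neg].
  have [q Lq] := length_exists (bruhat_inW (proj1 lt)).
  have [// | zb_gt0] := root_sign (inW_root (length_inW Lz) (posroot_root bP)).
  have := length_mulr_refl_gt Lz Lq bP zb_gt0.
  by rewrite ltnNge ltnW // (bruhat_lt_length lt Lq Lz).
have [q Lq qp] := length_mulr_refl_lt Lz bP neg.
apply: bstep_bruhat_lt; exists b; split; rewrite ?mulmx_reflK ?posroot_root //.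
by exists q, p.
Qed.

Lemma word_del L u : is_word u -> is_word (del_set L u).
Proof. by move/allP => uS; apply/allP => c /mem_mask /uS. Qed.

Lemma inW_tr w : in_W w -> in_W w^T.
Proof. by case=> u [uW <-]; exists (rev u); rewrite wprod_tr /is_word all_rev. Qed.

Lemma length_behead c u : is_word (c :: u) ->
  length_is (wprod (c :: u)) (size u).+1 -> length_is (wprod u) (size u).
Proof.
case/andP=> cS uW Lcu; split; first by exists u.
move=> v vW vu; have cvW : is_word (c :: v) by apply/andP.
by have := length_le Lcu cvW; rewrite /= vu => /(_ erefl).
Qed.

Lemma covered_mull_refl a y z p : a \in Phi -> length_is y p -> length_is z p.+1 ->
  covered (refl a *m y) (refl a *m z) -> covered y z.
Proof.
move=> aPhi Ly Lz /covered_bstep[b [bPhi z_eq _]].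
have {}z_eq : z = y *m refl b by rewrite -(refl_mulmxK z aPhi) z_eq -mulmxA refl_mulmxK.
split; last by exists p.
by apply: bstep_bruhat_lt; exists b; split => //; exists p, p.+1.
Qed.

Lemma posroot_trmx_simple a w p : simple a ->
  length_is w p -> length_is (refl a *m w) p.+1 -> posroot (w^T *m a).
Proof.
move=> aS Lw Law; have wW := length_inW Lw.
have gPhi : w^T *m a \in Phi := inW_root (inW_tr wW) (simple_root aS).
have [g_lt0 | g_gt0] := root_sign gPhi; last by rewrite /posroot gPhi.
have neg : dot t (w *m - (w^T *m a)) < 0.
  by rewrite mulmxN mulmxA inW_orthC // mul1mx dotNr oppr_lt0 posroot_gt0 ?simple_posroot.
have w_refl_g : w *m refl (w^T *m a) = refl a *m w.
  by rewrite -refl_conj trmxK ?inW_orthC // !mulmxA inW_orthC // mul1mx.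
have [q] := length_mulr_refl_lt Lw (posrootN gPhi g_lt0) neg.
by rewrite reflN w_refl_g => /(length_uniq Law) <-; rewrite ltnNge leqnSn.
Qed.

Lemma dot_neg_mull_simple a w p b : simple a -> length_is w p ->
  length_is (refl a *m w) p.+1 -> posroot b ->
  (dot t (w *m b) < 0) = (dot t (refl a *m w *m b) < 0) && (b != w^T *m a).
Proof.
move=> aS Lw Law bP; have wW := length_inW Lw.
have wb_eq c : (w *m b == c) = (b == w^T *m c).
  apply/eqP/eqP => [<- | ->]; by rewrite mulmxA (inW_orth, inW_orthC) // mul1mx.
have [-> | bg] := eqVneq b (w^T *m a).
  by rewrite andbF mulmxA inW_orthC // mul1mx lt_gtF ?posroot_gt0 ?simple_posroot.
have wbNa : w *m b != - a.
  rewrite wb_eq mulmxN; apply: contraTneq (posroot_gt0 bP) => ->.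
  by rewrite dotNr -leNgt oppr_le0 ltW ?posroot_gt0 // (posroot_trmx_simple aS Lw Law).
by rewrite andbT -mulmxA refl_simple_neg ?inW_root ?posroot_root // wb_eq.
Qed.

Lemma inS_mull_simple a x w p : simple a -> bstep x (refl a *m x) ->
  length_is w p -> length_is (refl a *m w) p.+1 ->
  forall b, inS Phi t x w b <-> inS Phi t x (refl a *m w) b /\ b <> w^T *m a.
Proof.
move=> aS ax Lw Law b.
have lift_b : bruhat_le x (w *m refl b) <-> bruhat_le x (refl a *m w *m refl b).
  by rewrite -mulmxA; apply: bruhat_lift_iff.
split=> [[bP /lift_b xwb /(bruhat_lt_refl Lw bP)] | [[bP /lift_b xwb lt] /eqP bg]].
  rewrite (dot_neg_mull_simple aS Lw Law bP) => /andP[neg /eqP bg].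
  by split=> //; split=> //; apply/(bruhat_lt_refl Law bP).
split=> //; apply/(bruhat_lt_refl Lw bP).
by rewrite (dot_neg_mull_simple aS Lw Law bP) bg andbT; apply/(bruhat_lt_refl Law bP).
Qed.

Lemma chain_label_size x u mu : chain_label Phi t x u mu -> (size mu <= size u)%N.
Proof.
case=> uniq_mu /allP range_mu _ _; rewrite -(size_iota 1 (size u)).
by apply: uniq_leq_size => // j /range_mu; rewrite mem_iota addnC addn1 ltnS.
Qed.

Lemma chain_label_length x u mu k : length_is (wprod u) (size u) ->
  chain_label Phi t x u mu -> (k <= size mu)%N ->
  length_is (wprod (del_set (take k mu) u)) (size u - k).
Proof.
move=> Lu [_ _ cover _]; elim: k => [|k IHk] k_le; first by rewrite take0 del_set_nil subn0.
have [_ [q [Lk1 Lk]]] := cover k.+1 k_le.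
by rewrite subnS (length_uniq (IHk (ltnW k_le)) Lk).
Qed.

Lemma lam_spec_behead x c u l : simple c -> bstep x (refl c *m x) ->
  lam_spec Phi t x (c :: u) (1%N :: l) -> lam_spec Phi t x u [seq j.-1 | j <- l].
Proof.
move=> cS cx [sorted_l mem_l].
have l_gt1 : all (ltn 1) l := order_path_min ltn_trans sorted_l.
have xle_cons j : (0 < j)%N ->
    bruhat_le x (wprod (del_set [:: j.+1] (c :: u))) <->
    bruhat_le x (wprod (del_set [:: j] u)).
  by move=> j0; rewrite del_set1_cons //=; apply: iff_sym; apply: bruhat_lift_iff.
split.
  rewrite sorted_map; apply: sub_in_sorted l_gt1 (path_sorted sorted_l).
  by move=> i j; rewrite !unfold_in /relpre /= => i1 j1 ij; lia.
move=> j; split.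
  case/mapP => i il ->; have i1 : (1 < i)%N := allP l_gt1 i il.
  have /mem_l[/andP[_ i_le] xle] : i \in 1%N :: l by rewrite inE il orbT.
  split; first by move: i_le => /=; lia.
  by apply/xle_cons; [lia | rewrite prednK // ltnW].
case=> /andP[j1 j_le] /(xle_cons _ j1) xle.
have : j.+1 \in 1%N :: l by apply/mem_l; split => //.
by rewrite inE eqSS (gtn_eqF j1) /= => jl; apply/mapP; exists j.+1.
Qed.

Lemma chain_label_rcons1_covered x c u mu :
  chain_label Phi t x (c :: u) (rcons mu 1%N) -> covered x (refl c *m x).
Proof.
case=> uniq_mu1 _ cover x_eq.
have mu1 : 1%N \notin mu by move: uniq_mu1; rewrite rcons_uniq => /andP[].
have x_eq' : wprod (del_set [seq j.-1 | j <- mu] u) = x by rewrite -(del_set_rcons1 _ c).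
have := cover (size mu).+1; rewrite size_rcons leqnn => /(_ isT).
rewrite take_oversize ?size_rcons // x_eq -cats1 take_size_cat //.
by rewrite del_set_cons (negbTE mu1) /= x_eq'.
Qed.

Lemma chain_label_behead x c u mu : is_word (c :: u) ->
  length_is (wprod (c :: u)) (size u).+1 ->
  chain_label Phi t x (c :: u) (rcons mu 1%N) ->
  chain_label Phi t x u [seq j.-1 | j <- mu].
Proof.
move=> cuW Lcu chain; have /andP[cS uW] := cuW.
have mu_size : (size mu <= size u)%N by have := chain_label_size chain; rewrite size_rcons.
case: (chain) => uniq_mu1 /allP range_mu1 cover x_eq.
have /andP[mu1 uniq_mu] : (1%N \notin mu) && uniq mu by rewrite -rcons_uniq.
have range_mu j : j \in mu -> (1 < j <= (size u).+1)%N.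
  move=> jmu; have j1 : j != 1%N by apply: contraNneq mu1 => <-.
  by have := range_mu1 j; rewrite mem_rcons inE jmu orbT => /(_ isT) /=; lia.
set mu' := [seq j.-1 | j <- mu].
have range_mu' : all (fun j => 1 <= j <= size u)%N mu'.
  by apply/allP => _ /mapP[j /range_mu jr ->]; lia.
have uniq_mu' : uniq mu'.
  by rewrite map_inj_in_uniq // => i j /range_mu ir /range_mu jr; lia.
have del_take k : (k <= size mu)%N ->
    del_set (take k (rcons mu 1%N)) (c :: u) = c :: del_set (take k mu') u.
  move=> k_le; rewrite -cats1 takel_cat // del_set_cons ifN ?map_take //.
  by apply: contra mu1 => /mem_take.
have L_take k : (k <= size mu)%N -> length_is (wprod (del_set (take k mu') u)) (size u - k).
  move=> k_le; have size_k : size (del_set (take k mu') u) = (size u - k)%N.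
    rewrite size_del_set ?take_uniq ?size_takel ?size_map //.
    by apply/allP => j /mem_take /(allP range_mu').
  rewrite -size_k; apply: (length_behead (c := c)); first by rewrite /= cS word_del.
  rewrite size_k -del_take // -subSn ?(leq_trans k_le) //.
  by apply: chain_label_length Lcu chain _; rewrite size_rcons leqW.
split => //.
- move=> k /andP[k0 k_le]; rewrite size_map in k_le.
  have k1_le : (k.-1 <= size mu)%N := leq_trans (leq_pred k) k_le.
  have Lk1 := L_take _ k1_le; rewrite (_ : size u - k.-1 = (size u - k).+1)%N in Lk1; last lia.
  apply: (covered_mull_refl (simple_root cS) (L_take _ k_le) Lk1).
  have := cover k; rewrite size_rcons k0 (leqW k_le) => /(_ isT).
  by rewrite !del_take.
- by rewrite -(del_set_rcons1 _ c).
Qed.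

End RootSystem.

Theorem lemma5p3 (R : realFieldType) (m : nat) (Phi : seq 'cV[R]_m) (t : 'cV[R]_m)
  (HPhi : root_system Phi) (Ht : regular Phi t)
  (x w : 'M[R]_m) (s : seq 'cV[R]_m) (l : seq nat) :
  bruhat_lt Phi t x w ->
  reduced_word Phi t s w ->
  good_word Phi t x s ->
  lam_spec Phi t x s l ->
  chain_label Phi t x s (rev l) ->
  nth 0%N l 0 = 1%N ->
  let a1 := head 0 s in
  let gamma1 := wprod (rev (behead s)) *m a1 in
  let l' := [seq i.-1 | i <- behead l] in
  [/\ bruhat_lt Phi t x (refl a1 *m x),
      (forall b, inS Phi t x (refl a1 *m w) b <-> (inS Phi t x w b /\ b <> gamma1)),
      reduced_word Phi t (behead s) (refl a1 *m w) /\ good_word Phi t x (behead s),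
      lam_spec Phi t x (behead s) l' &
      chain_label Phi t x (behead s) (rev l')].
Proof.
move=> _ [sW <- Lw] _ lam chain.
case: l lam chain => [//|i l] lam chain /= i1; subst i.
case: s sW Lw lam chain => [|c u] sW Lw lam chain /=.
  by case: lam => _ /(_ 1%N)[/(_ (mem_head _ _))[]].
rewrite rev_cons in chain; have /andP[cS uW] := sW.
have cover := chain_label_rcons1_covered chain.
have cx := covered_bstep cover.
have Lu : length_is Phi t (wprod u) (size u) := length_behead sW Lw.
have lam' := lam_spec_behead HPhi Ht cS cx lam.
have chain' := chain_label_behead HPhi sW Lw chain; rewrite map_rev in chain'.
have w_eq : refl c *m (refl c *m wprod u) = wprod u := refl_mulmxK HPhi _ (simple_root cS).
split=> //.
- exact: cover.1.
- by move=> b; rewrite w_eq -wprod_tr; apply: (inS_mull_simple HPhi Ht cS cx Lu Lw).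
- split; first by split; rewrite ?w_eq.
  exists [seq j.-1 | j <- l]; split=> //.
  by case: chain' => _ _ _ <-; congr wprod; apply: eq_del_set => j _; rewrite mem_rev.
Qed.
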